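(* Let $\mathcal{C}\subseteq\mathbb{N}^p$ be an integer cone, $\preceq$ a monomial order on $\mathbb{N}^p$, and $S$ a $\mathcal{C}$-semigroup with $S\neq\mathcal{C}$. Then $g(S)\le t(S)\,n(S)$.
   Context: An integer cone $\mathcal{C}\subseteq\mathbb{N}^p$ is the set of integer points of a rational cone in $\mathbb{Q}_{\ge 0}^p$ spanned by finitely many rational half-lines from the origin (assumed finitely generated). A $\mathcal{C}$-semigroup is a subset $S\subseteq\mathcal{C}$ containing $0$, closed under addition, with $\mathcal{C}\setminus S$ finite. The gap set is $\mathcal{H}(S)=\mathcal{C}\setminus S$ and the genus is $g(S)=\#\mathcal{H}(S)$. A monomial order $\preceq$ on $\mathbb{N}^p$ is a total order such that $\mathbf a\preceq\mathbf b$ implies $\mathbf a+\mathbf c\preceq\mathbf b+\mathbf c$ for all $\mathbf c\in\mathbb{N}^p$, and $\mathbf 0\preceq\mathbf c$ for all $\mathbf c$. The Frobenius vector is $F(S)=\max_{\preceq}\mathcal{H}(S)$. The set of pseudo-Frobenius elements is $\mathrm{PF}(S)=\{\mathbf x\in\mathcal{H}(S)\mid \mathbf x+(S\setminus\{0\})\subseteq S\}$ and the type is $t(S)=\#\mathrm{PF}(S)$. Finally $n(S)=\#\{\mathbf x\in S\mid \mathbf x\preceq F(S)\}$. *)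

From mathcomp Require Import all_boot all_order all_algebra.
Set Implicit Arguments. Unset Strict Implicit. Unset Printing Implicit Defensive.
Import Order.TTheory GRing.Theory Num.Theory.

Definition vec (p : nat) := {ffun 'I_p -> nat}.

Definition vzero (p : nat) : vec p := [ffun _ => 0%N].
Definition vadd (p : nat) (a b : vec p) : vec p := [ffun i => (a i + b i)%N].

Definition vset (p : nat) := vec p -> Prop.

Definition has_card (T : eqType) (A : T -> Prop) (n : nat) : Prop :=
  exists s : seq T, uniq s /\ (forall x, x \in s <-> A x) /\ size s = n.

Definition finite_set (T : eqType) (A : T -> Prop) : Prop :=
  exists s : seq T, forall x, A x -> x \in s.

Definition is_integer_cone (p : nat) (C : vset p) : Prop :=
  exists (k : nat) (V : 'I_k -> 'I_p -> rat),
    (forall i j, 0 <= V i j)%R /\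
    forall x : vec p, C x <->
      exists lam : 'I_k -> rat, (forall i, 0 <= lam i)%R /\
        forall j : 'I_p, ((x j)%:R = \sum_(i < k) lam i * V i j)%R.

Definition monomial_order (p : nat) (le : vec p -> vec p -> Prop) : Prop :=
  (forall a, le a a) /\
  (forall a b, le a b -> le b a -> a = b) /\
  (forall a b c, le a b -> le b c -> le a c) /\
  (forall a b, le a b \/ le b a) /\
  (forall a b c, le a b -> le (vadd a c) (vadd b c)) /\
  (forall c, le (vzero p) c).

Definition gaps (p : nat) (C S : vset p) : vset p := fun x => C x /\ ~ S x.

Definition is_C_semigroup (p : nat) (C S : vset p) : Prop :=
  (forall x, S x -> C x) /\
  S (vzero p) /\
  (forall a b, S a -> S b -> S (vadd a b)) /\
  finite_set (gaps C S).

Definition is_frobenius (p : nat) (le : vec p -> vec p -> Prop) (C S : vset p)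
  (F : vec p) : Prop :=
  gaps C S F /\ forall x, gaps C S x -> le x F.

Definition pseudo_frobenius (p : nat) (C S : vset p) : vset p := fun x =>
  gaps C S x /\ forall s, S s -> s <> vzero p -> S (vadd x s).

Definition below_frob (p : nat) (le : vec p -> vec p -> Prop) (S : vset p)
  (F : vec p) : vset p := fun x => S x /\ le x F.

From mathcomp Require Import all_boot all_order all_algebra.
From mathcomp Require Import zify.
From Stdlib Require Import Classical.
Import Order.TTheory GRing.Theory Num.Theory.
Set Implicit Arguments. Unset Strict Implicit. Unset Printing Implicit Defensive.

(* The idea is that every gap can be pushed up to a pseudo-Frobenius element:
   for a gap h there is s in S with h + s pseudo-Frobenius.  Indeed, if a gap
   y is not pseudo-Frobenius, some nonzero s in S gives a gap y + s of strictly
   larger weight (sum of coordinates); since the gap set is finite, weights of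
   gaps are bounded and this process must stop at a pseudo-Frobenius element.
   Moreover s <= h + s <= F for the monomial order, so s is an element of S
   below the Frobenius vector.  Hence h = f - s with f in PF(S) and s counted
   by n(S), and the map (f, s) |-> f - s covers the gap set, giving
   g <= t * n by a general counting lemma. *)

Definition vsub (p : nat) (a b : vec p) : vec p := [ffun i => (a i - b i)%N].
Definition wt (p : nat) (a : vec p) : nat := (\sum_(i < p) a i)%N.

Lemma vaddA p (a b c : vec p) : vadd (vadd a b) c = vadd a (vadd b c).
Proof. by apply/ffunP=> i; rewrite !ffunE addnA. Qed.

Lemma vadd0 p (a : vec p) : vadd (vzero p) a = a.
Proof. by apply/ffunP=> i; rewrite !ffunE add0n. Qed.

Lemma vaddn0 p (a : vec p) : vadd a (vzero p) = a.
Proof. by apply/ffunP=> i; rewrite !ffunE addn0. Qed.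

Lemma vaddK p (a b : vec p) : vsub (vadd a b) b = a.
Proof. by apply/ffunP=> i; rewrite !ffunE addnK. Qed.

Lemma wtD p (a b : vec p) : wt (vadd a b) = (wt a + wt b)%N.
Proof. by rewrite /wt -big_split /=; apply: eq_bigr => i _; rewrite ffunE. Qed.

Lemma wt_gt0 p (a : vec p) : a <> vzero p -> (0 < wt a)%N.
Proof.
move=> a_neq0; rewrite lt0n; apply/negP; rewrite sum_nat_eq0 => /forallP a0.
by apply: a_neq0; apply/ffunP => i; rewrite ffunE; apply/eqP/a0.
Qed.

Lemma finite_wt_bounded p (A : vset p) :
  finite_set A -> exists B, forall y, A y -> (wt y <= B)%N.
Proof.
move=> [s sA]; exists (\max_(x <- s) wt x)%N => y /sA ys.
exact: leq_bigmax_seq.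
Qed.

Lemma cone_add p (C : vset p) : is_integer_cone C ->
  forall x y, C x -> C y -> C (vadd x y).
Proof.
move=> [k [V [_ memC]]] x y /memC [l1 [l1_ge0 x_eq]] /memC [l2 [l2_ge0 y_eq]].
apply/memC; exists (fun i => l1 i + l2 i)%R; split.
  by move=> i; rewrite addr_ge0.
move=> j; rewrite ffunE natrD x_eq y_eq -big_split /=.
by apply: eq_bigr => i _; rewrite mulrDl.
Qed.

Section PushToPseudoFrobenius.

Variables (p : nat) (C S : vset p).
Hypothesis C_add : forall x y, C x -> C y -> C (vadd x y).
Hypothesis S_sub : forall x, S x -> C x.
Hypothesis S_zero : S (vzero p).
Hypothesis S_add : forall a b, S a -> S b -> S (vadd a b).
Hypothesis gaps_finite : finite_set (gaps C S).

Lemma gap_not_pf_step y : gaps C S y -> ~ pseudo_frobenius C S y ->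
  exists s, [/\ S s, s <> vzero p & gaps C S (vadd y s)].
Proof.
move=> [Cy nSy] not_pf; apply: NNPP => no_step; apply: not_pf.
split=> // s Ss s_neq0; apply: NNPP => nSys; apply: no_step.
by exists s; split=> //; split=> //; apply: C_add Cy (S_sub Ss).
Qed.

(* Every gap becomes pseudo-Frobenius after adding a suitable element of S:
   the steps above strictly increase the weight, which is bounded on gaps. *)
Lemma gap_reaches_pf h : gaps C S h ->
  exists2 s, S s & pseudo_frobenius C S (vadd h s).
Proof.
have [B wt_gap] := finite_wt_bounded gaps_finite.
suff push k y : k = (B - wt y)%N -> gaps C S y ->
    exists2 s, S s & pseudo_frobenius C S (vadd y s) by exact: push.
elim/ltn_ind: k y => k IH y k_eq y_gap.
have [y_pf | y_npf] := classic (pseudo_frobenius C S y).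
  by exists (vzero p); rewrite ?vaddn0.
have [s [Ss s_neq0 ys_gap]] := gap_not_pf_step y_gap y_npf.
have lt_measure : (B - wt (vadd y s) < k)%N.
  by rewrite k_eq; have := wt_gap _ ys_gap; have := wt_gt0 s_neq0; rewrite wtD; lia.
have [s' Ss' pf] := IH _ lt_measure (vadd y s) erefl ys_gap.
by exists (vadd s s'); [exact: S_add | rewrite -vaddA].
Qed.

End PushToPseudoFrobenius.

Lemma monomial_le_addl p (le : vec p -> vec p -> Prop) :
  monomial_order le -> forall h s, le s (vadd h s).
Proof.
move=> [_ [_ [_ [_ [le_add le0]]]]] h s.
by have := le_add _ _ s (le0 h); rewrite vadd0.
Qed.

Lemma has_card_le_mul (T U V : eqType) (A : T -> Prop) (B : U -> Prop)
    (D : V -> Prop) (f : U -> V -> T) (a b d : nat) :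
  has_card A a -> has_card B b -> has_card D d ->
  (forall x, A x -> exists2 u, B u & exists2 v, D v & x = f u v) ->
  (a <= b * d)%N.
Proof.
move=> [sA [uA [memA <-]]] [sB [_ [memB <-]]] [sD [_ [memD <-]]] cover.
rewrite -(size_allpairs f); apply: uniq_leq_size uA _ => x /memA.
by move=> /cover [u /memB Bu [v /memD Dv ->]]; apply: allpairs_f.
Qed.

Theorem mainTheorem1 (p : nat) (C : vset p) (le : vec p -> vec p -> Prop)
  (S : vset p) (F : vec p) (g t n : nat) :
  is_integer_cone C ->
  monomial_order le ->
  is_C_semigroup C S ->
  (exists x, C x /\ ~ S x) ->
  is_frobenius le C S F ->
  has_card (gaps C S) g ->
  has_card (pseudo_frobenius C S) t ->
  has_card (below_frob le S F) n ->
  (g <= t * n)%N.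
Proof.
move=> coneC mono [S_sub [S_zero [S_add gaps_fin]]] _ [_ F_max] card_g card_t card_n.
have le_trans : forall a b c, le a b -> le b c -> le a c by case: mono => _ [_ []].
apply: (has_card_le_mul (f := @vsub p) card_g card_t card_n) => h h_gap.
have [s Ss pf] := gap_reaches_pf (cone_add coneC) S_sub S_zero S_add gaps_fin h_gap.
exists (vadd h s) => //; exists s; last by rewrite vaddK.
split=> //; apply: le_trans (monomial_le_addl mono h s) _.
by apply: F_max; case: pf.
Qed.
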